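(* Let $n\ge2$, $0<k_0<\infty$, and let $\mathbf{Q}$ be the $(n+1)\times(n+1)$ symmetric tridiagonal matrix with $Q_{11}=1+1/k_0$, $Q_{ll}=2$ for $l=2,\dots,n$, $Q_{n+1,n+1}=1$, $Q_{lm}=-1$ if $|l-m|=1$, and $Q_{lm}=0$ otherwise. Let $\mathbb{E}_q[z_{j1}],\dots,\mathbb{E}_q[z_{jn}]>0$ and $\mu_{q(1/\xi_j^2)}>0$, and set $$\boldsymbol{\Sigma}_{q(\omega_j)}=\big(\mathsf{Diag}(0,\mathbb{E}_q[z_{j1}],\dots,\mathbb{E}_q[z_{jn}])+\mu_{q(1/\xi_j^2)}\mathbf{Q}\big)^{-1}.$$ Then $\boldsymbol{\Sigma}_{q(\omega_j)}$ is a positive matrix, i.e. $[\boldsymbol{\Sigma}_{q(\omega_j)}]_{ik}\ge0$ for all $i,k$.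
   Context: In the paper, $\mathbb{E}_q[z_{jt}]$ are means of Pólya–Gamma variational factors and $\mu_{q(1/\xi_j^2)}$ is a variational mean of an inverse-gamma precision, so both are positive; $\boldsymbol{\Sigma}_{q(\omega_j)}$ is the covariance of the optimal Gaussian variational factor of $\boldsymbol{\omega}_j$. *)

From HB Require Import structures.
From mathcomp Require Import all_boot all_order all_algebra.
Set Implicit Arguments. Unset Strict Implicit. Unset Printing Implicit Defensive.
Import Order.TTheory GRing.Theory Num.Theory.
Local Open Scope ring_scope.

(* Indices are 0-based: paper index l (1..n+1) is i = l-1 : 'I_(n.+1). *)

Definition Qmat (R : realFieldType) (n : nat) (k0 : R) : 'M[R]_(n.+1) :=
  \matrix_(i < n.+1, j < n.+1)
    if i == j then
      (if (i : nat) == 0%N then 1 + k0^-1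
       else if (i : nat) == n then 1 else 2)
    else if ((i : nat) == j.+1) || ((j : nat) == i.+1) then -1 else 0.

(* Diag(0, e_1, ..., e_n), with e : 'I_n -> R (e l = E_q[z_{j,l+1}]);
   diagonal entry at index i is 0 for i = 0 and e (i-1) otherwise. *)
Definition Dmat (R : realFieldType) (n : nat) (e : 'I_n -> R) : 'M[R]_(n.+1) :=
  \matrix_(i < n.+1, j < n.+1)
    if i == j then
      (match unlift ord0 i with None => 0 | Some l => e l end)
    else 0.

Definition Sigma_q (R : realFieldType) (n : nat) (k0 mu : R) (e : 'I_n -> R)
  : 'M[R]_(n.+1) := invmx (Dmat e + mu *: Qmat n k0).

From mathcomp Require Import all_boot all_order all_algebra.
From mathcomp Require Import zify lra.
Import Order.TTheory GRing.Theory Num.Theory.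
Local Open Scope ring_scope.

(* A := Diag(0, E z) + mu Q is a Z-matrix (nonpositive off-diagonal entries)
   whose column sums are positive: mu / k0 in the first column and E_q[z_jl]
   in the others, since the path-graph part of Q has zero column sums.  For
   such a matrix, v A >= 0 forces v >= 0: at a minimal entry v_j < 0 one gets
   (v A)_j <= v_j * (column sum j) < 0.  Applied to the rows of A^-1, whose
   products with A are unit vectors, this gives A^-1 >= 0; applied to
   v A = 0 with v and -v, it shows that A is invertible. *)

Section ZMatrixColumnDominant.

Variables (R : realFieldType) (m : nat) (A : 'M[R]_m.+1).
Hypothesis A_offdiag_le0 : forall i j, i != j -> A i j <= 0.
Hypothesis A_colsum_gt0 : forall j, 0 < \sum_i A i j.

Lemma Zmatrix_row_ge0 (v : 'rV[R]_m.+1) :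
  (forall j, 0 <= (v *m A) 0 j) -> forall j, 0 <= v 0 j.
Proof.
move=> vA_ge0.
have [j0 _ v_min] := @arg_minP _ R _ ord0 predT (fun j => v 0 j) isT.
suff v_j0_ge0 : 0 <= v 0 j0 by move=> j; exact: le_trans v_j0_ge0 (v_min j isT).
rewrite leNgt; apply/negP => v_j0_lt0.
have := vA_ge0 j0; rewrite mxE; apply/negP; rewrite -ltNge.
apply: (@le_lt_trans _ _ (\sum_i v 0 j0 * A i j0)).
  apply: ler_sum => i _.
  have [->|ij0] := eqVneq i j0; first by [].
  by apply: ler_wnM2r; [exact: A_offdiag_le0 | exact: v_min].
by rewrite -mulr_sumr nmulr_rlt0 // A_colsum_gt0.
Qed.

Lemma Zmatrix_unit : A \in unitmx.
Proof.
rewrite -row_free_unit; apply/inj_row_free => v vA0.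
have v_ge0 : forall j, 0 <= v 0 j.
  by apply: Zmatrix_row_ge0 => j; rewrite vA0 mxE.
have Nv_ge0 : forall j, 0 <= (- v) 0 j.
  by apply: Zmatrix_row_ge0 => j; rewrite mulNmx vA0 oppr0 mxE.
apply/matrixP => i j; rewrite [i]ord1 mxE; apply/le_anti.
by rewrite v_ge0 andbT -oppr_ge0; have := Nv_ge0 j; rewrite mxE.
Qed.

Lemma invmx_Zmatrix_ge0 i k : 0 <= invmx A i k.
Proof.
have := Zmatrix_row_ge0 (row i (invmx A)).
rewrite -row_mul mulVmx ?Zmatrix_unit // => /(_ _ k); rewrite mxE; apply => j.
by rewrite !mxE ler0n.
Qed.

End ZMatrixColumnDominant.

Lemma sum_ord_eq_natr (R : pzSemiRingType) (m a : nat) :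
  \sum_(i < m) ((i : nat) == a)%:R = (a < m)%N%:R :> R.
Proof.
rewrite (_ : (a < m)%N%:R = if (a < m)%N then 1 else 0); last by case: ltnP.
rewrite -(big_ord1_eq +%R (fun=> 1 : R)) [RHS]big_mkcond.
by apply: eq_bigr => i _; case: eqP.
Qed.

Lemma sum_ord_eq_succ_natr (R : pzSemiRingType) (m a : nat) :
  (a <= m)%N -> \sum_(i < m) (a == (i : nat).+1)%:R = (0 < a)%N%:R :> R.
Proof.
case: a => [_|a a_le_m]; first by rewrite big1.
under eq_bigr do rewrite eqSS eq_sym.
by rewrite sum_ord_eq_natr a_le_m.
Qed.

Lemma Qmat_tridiagE (R : realFieldType) n (k0 : R) (i j : 'I_n.+1) :
  Qmat n k0 i j = (i == j)%:R * Qmat n k0 j j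
                  - ((i : nat) == j.+1)%:R - ((j : nat) == i.+1)%:R.
Proof.
rewrite !mxE eqxx.
have [->|ij] := eqVneq i j.
  by rewrite (_ : (j : nat) == j.+1 = false) ?mul1r ?subr0 //; lia.
have ij_nat : (i : nat) != j by [].
rewrite mul0r sub0r; case: eqP => [i_succ|_]; case: eqP => [j_succ|_] /=;
  rewrite ?subr0 ?oppr0 ?sub0r //; lia.
Qed.

Lemma Qmat_offdiag_le0 (R : realFieldType) n (k0 : R) (i j : 'I_n.+1) :
  i != j -> Qmat n k0 i j <= 0.
Proof. by move=> ij; rewrite mxE (negbTE ij); case: ifP; rewrite ?lerN10. Qed.

Lemma Qmat_colsum (R : realFieldType) n (k0 : R) (j : 'I_n.+1) : (0 < n)%N ->
  \sum_i Qmat n k0 i j = if (j : nat) == 0%N then k0^-1 else 0.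
Proof.
move=> n_gt0; under eq_bigr do rewrite Qmat_tridiagE.
rewrite !sumrB -mulr_suml !sum_ord_eq_natr ltn_ord mul1r ltnS.
rewrite sum_ord_eq_succ_natr ?(ltnW (ltn_ord j)) // [Qmat _ _ j j]mxE eqxx.
have [-> /=|j_gt0] := posnP j; first by rewrite n_gt0 /=; lra.
have [-> /=|jn] := eqVneq (j : nat) n; first by rewrite ltnn subr0 subrr.
rewrite (_ : (j < n)%N) /=; first by lra.
by have := ltn_ord j; lia.
Qed.

Lemma Dmat_colsum (R : realFieldType) n (e : 'I_n -> R) (j : 'I_n.+1) :
  \sum_i Dmat e i j = Dmat e j j.
Proof.
by rewrite (bigD1 j) //= big1 ?addr0 // => i ij; rewrite mxE (negbTE ij).
Qed.

Theorem lemma2 (R : realFieldType) (n : nat) (k0 mu : R) (e : 'I_n -> R)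
  (hn : (2 <= n)%N) (hk0 : 0 < k0) (he : forall l, 0 < e l) (hmu : 0 < mu) :
  forall i k : 'I_n.+1, 0 <= Sigma_q k0 mu e i k.
Proof.
have n_gt0 : (0 < n)%N by exact: leq_trans hn.
move=> i k; apply: invmx_Zmatrix_ge0 => {i k} [i j ij | j].
  rewrite mxE [Dmat e i j]mxE [(mu *: Qmat n k0) i j]mxE (negbTE ij) add0r.
  by apply: mulr_ge0_le0; [exact: ltW | exact: Qmat_offdiag_le0].
rewrite (eq_bigr (fun i => Dmat e i j + mu * Qmat n k0 i j)); last first.
  by move=> i _; rewrite mxE [(mu *: Qmat n k0) i j]mxE.
rewrite big_split -mulr_sumr Dmat_colsum Qmat_colsum //= [Dmat e j j]mxE eqxx.
case: unliftP => [l ->|->] /=; first by rewrite mulr0 addr0.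
by rewrite add0r mulr_gt0 ?invr_gt0.
Qed.
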